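(* Let $q\in(0,1)$, a fixed partition $\mathcal N=\mathcal H_0\sqcup\mathcal H_1$, and $p\in[0,1]^N$ be given. For each $i\in\mathcal L\cup\mathcal R\cup\{\tilde k\}$ let $$\mathrm{FDP}_i:=\max_{p'\in[0,1]^N:\ \|p-p'\|_0\le1,\ \tilde k(p')=i}\mathrm{FDP}[BH_q;p'].$$ Then $$\max_{p'\in[0,1]^N:\ \|p-p'\|_0\le1}\mathrm{FDP}[BH_q;p']=\max_{i\in\mathcal L\cup\mathcal R\cup\{\tilde k\}}\mathrm{FDP}_i.$$
   Context: $\mathcal N=\{1,\dots,N\}$. For $x\in[0,1]^N$, $B^{\mathcal N}_{1:i}(x)=|\{j\in\mathcal N:0\le x_j<iq/N\}|$ ($B^{\mathcal N}_{1:0}=0$), $\tilde k(x)=\max\{i\in\{0,\dots,N\}:B^{\mathcal N}_{1:i}(x)=i\}$; the Benjamini–Hochberg procedure $BH_q$ rejects tests $j$ with $x_j<\tilde k(x)q/N$, and $\mathrm{FDP}[BH_q;x]=|\{j\in\mathcal H_0:x_j<\tilde k(x)q/N\}|/\max(\tilde k(x),1)$. Write $\tilde k=\tilde k(p)$, $B^{\mathcal N}_{1:i}=B^{\mathcal N}_{1:i}(p)$. $\|p-p'\|_0$ is the number of differing coordinates. $\mathcal L:=\{i\in\{\tilde k+1,\dots,N\}:B^{\mathcal N}_{1:i}=i-1\}$. $i^*:=\max(0,\max\{i\in\{1,\dots,\tilde k-1\}:B^{\mathcal N}_{1:i}=i+1\})$ (inner maximum omitted if empty), and $\mathcal R:=\{i\in\{i^*+1,\dots,\tilde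 k-1\}:B^{\mathcal N}_{1:i}=i\}\cup\{i^*\}$. *)

From mathcomp Require Import all_boot all_order all_algebra.
From mathcomp Require Import reals.
Set Implicit Arguments. Unset Strict Implicit. Unset Printing Implicit Defensive.
Import Order.TTheory GRing.Theory Num.Theory.
Local Open Scope ring_scope.

(* Tests are indexed by 'I_N (test j : 'I_N corresponds to test j+1 of the paper). *)
Section BH.
Variables (R : realType) (N : nat) (q : R).

Definition Bcount (x : 'I_N -> R) (i : nat) : nat :=
  #|[pred j : 'I_N | (0 <= x j) && (x j < i%:R * q / N%:R)]|.

Definition ktilde (x : 'I_N -> R) : nat :=
  \max_(i < N.+1 | Bcount x i == i) (i : nat).

Definition FDP (H0 : {set 'I_N}) (x : 'I_N -> R) : R :=
  (#|[pred j in H0 | x j < (ktilde x)%:R * q / N%:R]|)%:R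
    / (maxn (ktilde x) 1)%:R.

Definition dist0 (x y : 'I_N -> R) : nat := #|[pred j : 'I_N | x j != y j]|.

Definition in01 (x : 'I_N -> R) : Prop := forall j, 0 <= x j <= 1.

Definition Lset (p : 'I_N -> R) : seq nat :=
  [seq i <- iota (ktilde p).+1 (N - ktilde p) | Bcount p i == i.-1].

Definition istar (p : 'I_N -> R) : nat :=
  \max_(1 <= i < ktilde p | Bcount p i == i.+1) i.

Definition Rset (p : 'I_N -> R) : seq nat :=
  istar p :: [seq i <- iota (istar p).+1 ((ktilde p).-1 - istar p) | Bcount p i == i].

End BH.

Definition IsMax {R : realType} (P : R -> Prop) (m : R) : Prop :=
  P m /\ forall x, P x -> x <= m.

(* Changing one p-value moves every count B_{1:i} by at most one.  Hence the
   new k~ is either k~ itself, an index i > k~ where B_{1:i} = i - 1 (the set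
   L), or an index i < k~ with B_{1:i} in {i, i + 1} above which no count
   exceeds its index (this is exactly R, whose least element is istar).
   Conversely each of these indices is attained by moving a single p-value to
   0 (for L) or to 1 (for R), chosen as the smallest p-value above the
   threshold i q / N, or (for i = istar > 0) any p-value below that
   threshold.  Since FDP only takes the finitely many values a / b with
   a <= N and b <= N + 1, all the maxima exist, and the overall maximum
   splits along the value of k~(p'). *)
From mathcomp Require Import all_boot all_order all_algebra.
From mathcomp Require Import reals.
From mathcomp Require Import zify.
From Stdlib Require Import Classical IndefiniteDescription.
Set Implicit Arguments.
Unset Strict Implicit.
Import Order.TTheory GRing.Theory Num.Theory.
Local Open Scope ring_scope.

Lemma nondecreasing_cross (g : nat -> nat) (s a b : nat) :
    (forall m, g m <= g m.+1)%N -> (a <= b)%N -> (a + s < g a)%N -> (g b <= b + s)%N ->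
  exists2 m, (a < m <= b)%N & g m = (m + s)%N.
Proof.
move=> g_mono; elim: b => [|b IH] ab ga gb.
  by move: ab ga; rewrite leqn0 => /eqP ->; lia.
have [ba|ab'] := ltnP b a.
  have a_eq : a = b.+1 by lia.
  by move: ga; rewrite a_eq; lia.
have [gb'|gb'] := leqP (g b) (b + s).
  by have [m /andP[am mb] gm] := IH ab' ga gb'; exists m; rewrite ?am ?(leqW mb).
by exists b.+1; [lia | have := g_mono b; lia].
Qed.

Lemma card_swap1 (T : finType) (A B : pred T) j :
  (forall j', j' != j -> A j' = B j') -> (#|A| + B j = #|B| + A j)%N.
Proof.
move=> AB; rewrite (cardD1 j A) (cardD1 j B).
have -> : #|[predD1 A & j]| = #|[predD1 B & j]|.
  by apply: eq_card => j'; rewrite !inE; case: eqVneq => //= /AB; rewrite !unfold_in.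
by rewrite !unfold_in; case: (A j); case: (B j); lia.
Qed.

Lemma ex_IsMax_finite (R : realType) (s : seq R) (P : R -> Prop) :
  (forall v, P v -> v \in s) -> (exists v, P v) -> exists m, IsMax P m.
Proof.
elim: s P => [|a s IH] P Ps [v Pv]; first by have := Ps v Pv.
have [[w [Pw ws]]|none] := classic (exists w, P w /\ w \in s); last first.
  have eq_a u : P u -> u = a.
    move=> Pu; move: (Ps u Pu); rewrite in_cons => /orP[/eqP //|us].
    by case: none; exists u.
  by exists a; split=> [|u /eq_a ->]; rewrite -?(eq_a v Pv).
have [m [[Pm ms] m_max]] :=
  IH (fun u => P u /\ u \in s) (fun _ => @proj2 _ _) (ex_intro _ w (conj Pw ws)).
have le_m u : P u -> u != a -> u <= m.
  by move=> Pu ua; apply: m_max; move: (Ps u Pu); rewrite in_cons (negbTE ua).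
have [Pa|nPa] := classic (P a).
  exists (Order.max a m); split; first by rewrite /Order.max; case: ifP.
  move=> u Pu; rewrite le_max.
  by case: (eqVneq u a) => [->|/(le_m u Pu) ->]; rewrite ?lexx ?orbT.
exists m; split=> // u Pu; apply: le_m => //.
by apply/eqP => ua; rewrite ua in Pu.
Qed.

Lemma IsMax_union (R : realType) (I : Type) (J : I -> Prop) (P : R -> Prop)
    (Q : I -> R -> Prop) (M : R) (f : I -> R) :
  IsMax P M -> (forall i, J i -> IsMax (Q i) (f i)) ->
  (forall v, P v -> exists2 i, J i & Q i v) -> (forall i v, Q i v -> P v) ->
  IsMax (fun v => exists i, J i /\ v = f i) M.
Proof.
move=> [PM M_max] f_max PQ QP; split=> [|_ [i [Ji ->]]].
  have [i Ji QiM] := PQ M PM; have [Qfi fi_max] := f_max i Ji.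
  by exists i; split=> //; apply/eqP; rewrite eq_le fi_max // M_max //; apply: QP Qfi.
by apply: M_max; apply: (QP i); case: (f_max i Ji).
Qed.

Section Counts.
Variables (R : realType) (N : nat) (q : R).
Implicit Types x y : 'I_N -> R.

Local Notation thr m := ((m)%:R * q / N%:R).
Local Notation B x m := (Bcount q x m).
Local Notation kt x := (ktilde q x).

Lemma Bcount0 x : B x 0 = 0%N.
Proof.
apply: eq_card0 => j; rewrite !inE !mul0r.
by apply/negP => /andP[x_ge0 x_lt0]; move: (le_lt_trans x_ge0 x_lt0); rewrite ltxx.
Qed.

Lemma Bcount_leN x m : (B x m <= N)%N.
Proof. by rewrite -{2}(card_ord N) max_card. Qed.

Lemma Bcount_swap x y j m : (forall j', j' != j -> x j' = y j') -> 0 <= x j -> 0 <= y j ->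
  (B x m + (y j < thr m)%R = B y m + (x j < thr m)%R)%N.
Proof.
move=> xy x_ge0 y_ge0.
have := @card_swap1 _ (fun j' => (0 <= x j') && (x j' < thr m))
                      (fun j' => (0 <= y j') && (y j' < thr m)) j.
by rewrite x_ge0 y_ge0; apply=> j' /xy ->.
Qed.

Lemma Bcount_update x j v m : 0 <= x j -> 0 <= v ->
  (B [eta x with j |-> v] m + (x j < thr m)%R = B x m + (v < thr m)%R)%N.
Proof.
move=> x_ge0 v_ge0; have := @Bcount_swap [eta x with j |-> v] x j m.
by rewrite /= eqxx; apply=> // j' /= /negbTE ->.
Qed.

Lemma ktilde_leN x : (kt x <= N)%N.
Proof. by apply/bigmax_leqP => i _; rewrite -ltnS. Qed.

Lemma Bcount_ktilde x : B x (kt x) = kt x.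
Proof.
apply: (big_ind (fun k => B x k = k)) => [|a b Ba Bb|i /eqP //]; first exact: Bcount0.
by rewrite /maxn; case: ifP.
Qed.

Lemma leq_ktilde x i : (i <= N)%N -> B x i = i -> (i <= kt x)%N.
Proof.
move=> iN Bi; have i_ord : (i < N.+1)%N by [].
by apply: (@leq_bigmax_cond _ _ (fun k : 'I_N.+1 => k : nat) (Ordinal i_ord)); rewrite /= Bi.
Qed.

Lemma ktilde_eq x i : (i <= N)%N -> B x i = i ->
  (forall m, (i < m <= N)%N -> B x m != m) -> kt x = i.
Proof.
move=> iN Bi Bm; have := leq_ktilde iN Bi; rewrite leq_eqVlt => /orP[/eqP //|i_kt].
by have := Bm _ (introT andP (conj i_kt (ktilde_leN x))); rewrite Bcount_ktilde eqxx.
Qed.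

Lemma eq_ktilde x y : x =1 y -> kt x = kt y.
Proof.
move=> xy; apply: eq_bigl => i; congr (_ == _).
by apply: eq_card => j; rewrite !inE xy.
Qed.

Lemma istar_spec x : istar q x = 0%N \/
  (0 < istar q x < kt x)%N /\ B x (istar q x) = (istar q x).+1.
Proof.
rewrite /istar big_seq_cond.
apply: (big_ind (fun s => s = 0%N \/ (0 < s < kt x)%N /\ B x s = s.+1)) => [|a b|i].
- by left.
- by rewrite /maxn; case: ifP.
- by rewrite mem_index_iota => /andP[i_range /eqP Bi]; right.
Qed.

Lemma leq_istar x i : (0 < i < kt x)%N -> B x i = i.+1 -> (i <= istar q x)%N.
Proof.
move=> i_range Bi.
by apply: (leq_bigmax_seq (F := id)); [rewrite mem_index_iota | rewrite /= Bi].
Qed.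

Lemma mem_Rset x i : (i < kt x)%N -> B x i = i \/ B x i = i.+1 ->
  (forall m, (i < m < kt x)%N -> (B x m <= m)%N) -> i \in Rset q x.
Proof.
move=> i_kt Bi Bm.
have is_i : (istar q x <= i)%N.
  case: (istar_spec x) => [->//|[/andP[_ is_kt] Bis]].
  rewrite leqNgt; apply/negP => i_is.
  by have := Bm _ (introT andP (conj i_is is_kt)); rewrite Bis ltnn.
rewrite /Rset in_cons mem_filter mem_iota.
case: Bi => Bi.
  case: (eqVneq i (istar q x)) => [//|i_is] /=.
  by rewrite Bi eqxx ltn_neqAle eq_sym i_is is_i /=; lia.
have i_gt0 : (0 < i)%N by case: i Bi {i_kt Bm is_i} => [|//]; rewrite Bcount0.
by rewrite [i == _]eqn_leq is_i leq_istar ?i_gt0.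
Qed.

Lemma dist0_refl x : dist0 x x = 0%N.
Proof. by apply: eq_card0 => j; rewrite inE eqxx. Qed.

Lemma dist0_update x j v : (dist0 x [eta x with j |-> v] <= 1)%N.
Proof.
apply/card_le1_eqP => a b; rewrite !inE /=.
by case: (eqVneq a j) => [->|_]; case: (eqVneq b j) => [->|_]; rewrite ?eqxx.
Qed.

Lemma in01_update x j v : in01 x -> 0 <= v <= 1 -> in01 [eta x with j |-> v].
Proof. by move=> x01 v01 j' /=; case: eqP. Qed.

Lemma dist0_le1_off1 x y : (dist0 x y <= 1)%N ->
  x =1 y \/ exists j, forall j', j' != j -> x j' = y j'.
Proof.
move=> /card_le1_eqP xy1; case: (pickP [pred j | x j != y j]) => [j xyj|xy]; last first.
  by left=> j; apply/eqP; move/negbT: (xy j); rewrite negbK.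
right; exists j => j' j'j; apply/eqP; apply: contraNT j'j => xyj'.
by apply/eqP; apply: xy1; rewrite inE.
Qed.

Definition bh_index x (i : nat) : bool :=
  (i \in Lset q x) || (i \in Rset q x) || (i == kt x).

Definition reachable x (i : nat) : Prop :=
  exists y, in01 y /\ (dist0 x y <= 1)%N /\ kt y = i.

Lemma reachable_update x j v : in01 x -> 0 <= v <= 1 ->
  reachable x (kt [eta x with j |-> v]).
Proof.
move=> x01 v01; exists [eta x with j |-> v].
by split; [exact: in01_update | rewrite dist0_update].
Qed.

Lemma min_above_thr x i : in01 x -> (B x i < N)%N ->
  exists j, thr i <= x j /\ forall m, thr m <= x j -> (B x m <= B x i)%N.
Proof.
move=> x01 Bi_lt; case: (pickP [pred j | thr i <= x j]) => [j0 j0_above|none]; last first.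
  suff : B x i = N by lia.
  rewrite /Bcount -[RHS]card_ord; apply: eq_card => j; rewrite !inE.
  by have /andP[-> _] := x01 j; move: (none j) => /= /negbT; rewrite -ltNge.
case: (arg_minP x j0_above) => j j_above j_min; exists j; split=> // m m_le.
apply: subset_leq_card; apply/subsetP => j'; rewrite !inE => /andP[-> xj'] /=.
by rewrite ltNge; apply/negP => /j_min; rewrite leNgt (lt_le_trans xj' m_le).
Qed.

Definition FDP_values : seq R :=
  [seq a%:R / b%:R | a <- iota 0 N.+1, b <- iota 0 N.+2].

Lemma FDP_in_values (H0 : {set 'I_N}) x : FDP q H0 x \in FDP_values.
Proof.
apply: (allpairs_f (fun a b : nat => a%:R / b%:R : R)); rewrite mem_iota /=.
  by rewrite ltnS (leq_trans (max_card _)) ?card_ord.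
by have := ktilde_leN x; lia.
Qed.

Lemma ex_IsMax_FDP (H0 : {set 'I_N}) (P : R -> Prop) :
  (forall v, P v -> exists x, v = FDP q H0 x) -> (exists v, P v) -> exists m, IsMax P m.
Proof.
move=> P_FDP; apply: (ex_IsMax_finite (s := FDP_values)) => v /P_FDP[x ->].
exact: FDP_in_values.
Qed.

End Counts.

Section Monotone.
Variables (R : realType) (N : nat) (q : R).
Hypothesis q_ge0 : 0 <= q.
Implicit Types x y : 'I_N -> R.

Local Notation thr m := ((m)%:R * q / N%:R).
Local Notation B x m := (Bcount q x m).
Local Notation kt x := (ktilde q x).

Lemma thr_le m n : (m <= n)%N -> thr m <= thr n.
Proof.
move=> mn; apply: ler_wpM2r; first by rewrite invr_ge0 ler0n.
by apply: ler_wpM2r; rewrite ?ler_nat.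
Qed.

Lemma Bcount_le x m n : (m <= n)%N -> (B x m <= B x n)%N.
Proof.
move=> mn; apply: subset_leq_card; apply/subsetP => j; rewrite !inE.
by case/andP => -> /= /lt_le_trans; apply; apply: thr_le.
Qed.

Lemma Bcount_gt_ktilde x m : (kt x < m <= N)%N -> (B x m < m)%N.
Proof.
case/andP=> kt_m mN; rewrite ltnNge; apply/negP => m_Bm.
suff [m' /andP[kt_m' m'N] Bm'] : exists2 m', (kt x < m' <= N)%N & B x m' = m'.
  by have := leq_ktilde m'N Bm'; lia.
have [Bm|Bm] := eqVneq (B x m) m; first by exists m; rewrite ?kt_m.
have Bm_gt : (m + 0 < B x m)%N by lia.
have BN : (B x N <= N + 0)%N by rewrite addn0 Bcount_leN.
have [m' /andP[mm' m'N] Bm'] :=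
  nondecreasing_cross (fun k => Bcount_le x (leqnSn k)) mN Bm_gt BN.
by exists m'; [lia | rewrite Bm' addn0].
Qed.

Lemma Bcount_gt_istar x m : (istar q x < m <= N)%N -> (B x m <= m)%N.
Proof.
case/andP=> is_m mN; case: (ltngtP m (kt x)) => [m_kt|kt_m|->]; last first.
- by rewrite Bcount_ktilde.
- by apply: ltnW; apply: Bcount_gt_ktilde; rewrite kt_m.
rewrite leqNgt; apply/negP => m_Bm.
suff [m' /andP[mm' m'_kt] Bm'] : exists2 m', (m <= m' < kt x)%N & B x m' = m'.+1.
  by have := leq_istar (_ : 0 < m' < kt x)%N Bm'; lia.
have [Bm|Bm] := eqVneq (B x m) m.+1; first by exists m; rewrite ?leqnn.
have Bm_gt : (m + 1 < B x m)%N by lia.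
have Bkt : (B x (kt x) <= kt x + 1)%N by rewrite Bcount_ktilde leq_addr.
have [m' /andP[mm' m'_kt] Bm'] :=
  nondecreasing_cross (fun k => Bcount_le x (leqnSn k)) (ltnW m_kt) Bm_gt Bkt.
exists m'; last by rewrite Bm' addn1.
by case: (ltngtP m' (kt x)) Bm' => [||->]; rewrite ?Bcount_ktilde; lia.
Qed.

Lemma ktilde_gt_mem_Lset x y j :
    (forall j', j' != j -> x j' = y j') -> 0 <= x j -> 0 <= y j ->
  (kt x < kt y)%N -> kt y \in Lset q x.
Proof.
move=> xy x_ge0 y_ge0 kt_lt; rewrite mem_filter mem_iota.
have ktN := ktilde_leN q y.
have Bx_lt : (B x (kt y) < kt y)%N by apply: Bcount_gt_ktilde; lia.
have := Bcount_swap q (kt y) xy x_ge0 y_ge0; rewrite Bcount_ktilde => sw.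
by apply/andP; split; [apply/eqP|]; lia.
Qed.

Lemma ktilde_lt_mem_Rset x y j :
    (forall j', j' != j -> x j' = y j') -> 0 <= x j -> 0 <= y j ->
  (kt y < kt x)%N -> kt y \in Rset q x.
Proof.
move=> xy x_ge0 y_ge0 kt_lt; have ktN := ktilde_leN q x.
have sw m := Bcount_swap q m xy x_ge0 y_ge0.
have By_lt m : (kt y < m <= N)%N -> (B y m < m)%N by apply: Bcount_gt_ktilde.
have y_above : ~~ (y j < thr (kt x))%R.
  have := By_lt (kt x); have := sw (kt x); rewrite Bcount_ktilde.
  by case: (y j < _)%R => //=; lia.
have y_above_le m : (m <= kt x)%N -> (y j < thr m)%R = false.
  by move=> m_kt; apply: contraNF y_above => /lt_le_trans; apply; apply: thr_le.
apply: mem_Rset => // [|m /andP[m_gt m_lt]].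
  have := sw (kt y); rewrite y_above_le ?(ltnW kt_lt) // Bcount_ktilde.
  by case: (x j < _)%R; [right|left]; lia.
by have := By_lt m; have := sw m; rewrite y_above_le ?(ltnW m_lt); lia.
Qed.

Lemma ktilde_neighbour_index x y : in01 x -> in01 y -> (dist0 x y <= 1)%N ->
  bh_index q x (kt y).
Proof.
move=> x01 y01 /dist0_le1_off1[xy|[j xy]].
  by rewrite /bh_index -(eq_ktilde q xy) eqxx orbT.
have /andP[x_ge0 _] := x01 j; have /andP[y_ge0 _] := y01 j.
rewrite /bh_index; case: (ltngtP (kt x) (kt y)) => [lt|gt|_].
- by rewrite (ktilde_gt_mem_Lset xy).
- by rewrite (ktilde_lt_mem_Rset xy) ?orbT.
- by rewrite orbT.
Qed.

End Monotone.

Section Reachability.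
Variables (R : realType) (N : nat) (q : R).
Hypotheses (q_gt0 : 0 < q) (q_le1 : q <= 1).
Implicit Types x : 'I_N -> R.

Local Notation thr m := ((m)%:R * q / N%:R).
Local Notation B x m := (Bcount q x m).
Local Notation kt x := (ktilde q x).

Let q_ge0 : 0 <= q := ltW q_gt0.

Lemma thr_gt0 m : (0 < N)%N -> (0 < m)%N -> 0 < thr m.
Proof. by move=> N_gt0 m_gt0; rewrite divr_gt0 ?mulr_gt0 ?ltr0n. Qed.

Lemma thr_le1 m : (m <= N)%N -> thr m <= 1.
Proof.
move=> mN; apply: le_trans q_le1.
have [->|N_gt0] := posnP N; first by rewrite invr0 mulr0.
by rewrite ler_pdivrMr ?ltr0n // mulrC ler_wpM2l ?ler_nat.
Qed.

Lemma reachable_Lset x (i : nat) : in01 x -> i \in Lset q x -> reachable q x i.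
Proof.
move=> x01; rewrite mem_filter mem_iota => /andP[/eqP Bi /andP[kt_i i_lt]].
have ktN := ktilde_leN q x.
have Bi_lt : (B x i < N)%N by lia.
have [j [j_above j_min]] := min_above_thr x01 Bi_lt.
have /andP[x_ge0 _] := x01 j.
set y := [eta x with j |-> 0].
have <- : kt y = i; last by apply: reachable_update => //; rewrite lexx ler01.
have Bup m : (0 < m <= N)%N -> (B y m + (x j < thr m)%R = (B x m).+1)%N.
  by case/andP=> m_gt0 mN; rewrite Bcount_update ?lexx // thr_gt0 ?addn1 //; lia.
apply: ktilde_eq => [|//|m /andP[i_m mN]]; first by lia.
  by have := Bup i (_ : 0 < i <= N)%N; rewrite ltNge j_above /=; lia.
have := Bup m (_ : 0 < m <= N)%N; case: (ltP (x j) (thr m)) => [xj_lt|xj_ge].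
  by have := Bcount_gt_ktilde q_ge0 (_ : kt x < m <= N)%N; lia.
by have := j_min m xj_ge; lia.
Qed.

Lemma reachable_istar x : in01 x -> (0 < istar q x)%N -> reachable q x (istar q x).
Proof.
move=> x01 is_gt0; have [is0|[/andP[_ is_kt] Bis]] := istar_spec q x.
  by rewrite is0 in is_gt0.
have ktN := ktilde_leN q x.
have [j] : exists j, j \in [pred j | (0 <= x j) && (x j < thr (istar q x))].
  by apply/card_gt0P; rewrite -/(Bcount q x _) Bis.
rewrite inE => /andP[x_ge0 xj_lt].
set y := [eta x with j |-> 1].
have <- : kt y = istar q x; last by apply: reachable_update => //; rewrite ler01 lexx.
have Bup m : (m <= N)%N -> (B y m + (x j < thr m)%R = B x m)%N.
  by move=> mN; rewrite Bcount_update ?ler01 // ltNge thr_le1 ?addn0.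
apply: ktilde_eq => [|//|m /andP[is_m mN]]; first by lia.
  by have := Bup _ (ltnW (leq_trans is_kt ktN)); rewrite xj_lt Bis; lia.
have := Bcount_gt_istar q_ge0 (_ : istar q x < m <= N)%N; have := Bup m mN.
by rewrite (lt_le_trans xj_lt (thr_le N q_ge0 (ltnW is_m))); lia.
Qed.

Lemma reachable_fixpoint x i : in01 x -> (istar q x <= i < kt x)%N -> B x i = i ->
  reachable q x i.
Proof.
move=> x01 /andP[is_i i_kt] Bi; have ktN := ktilde_leN q x.
have Bi_lt : (B x i < N)%N by lia.
have [j [j_above j_min]] := min_above_thr x01 Bi_lt.
have /andP[x_ge0 _] := x01 j.
set y := [eta x with j |-> 1].
have <- : kt y = i; last by apply: reachable_update => //; rewrite ler01 lexx.
have Bup m : (m <= N)%N -> (B y m + (x j < thr m)%R = B x m)%N.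
  by move=> mN; rewrite Bcount_update ?ler01 // ltNge thr_le1 ?addn0.
apply: ktilde_eq => [|//|m /andP[i_m mN]]; first by lia.
  by have := Bup i (ltnW (leq_trans i_kt ktN)); rewrite ltNge j_above Bi; lia.
have := Bup m mN; case: (ltP (x j) (thr m)) => [xj_lt|xj_ge].
  by have := Bcount_gt_istar q_ge0 (_ : istar q x < m <= N)%N; lia.
by have := j_min m xj_ge; lia.
Qed.

Lemma reachable_Rset x (i : nat) : in01 x -> i \in Rset q x -> reachable q x i.
Proof.
move=> x01; rewrite in_cons mem_filter mem_iota.
case/orP=> [/eqP->|/andP[/eqP Bi /andP[is_i i_lt]]]; last first.
  by apply: reachable_fixpoint => //; apply/andP; split; lia.
have [is0|[/andP[is_gt0 _] _]] := istar_spec q x; last exact: reachable_istar.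
rewrite is0; have [kt0|kt_gt0] := posnP (kt x).
  by exists x; split=> //; rewrite dist0_refl kt0.
by apply: reachable_fixpoint; rewrite ?is0 ?kt_gt0 ?Bcount0.
Qed.

Lemma reachable_index x (i : nat) : in01 x -> bh_index q x i -> reachable q x i.
Proof.
move=> x01 /orP[/orP[iL|iR]|/eqP->]; [exact: reachable_Lset | exact: reachable_Rset |].
by exists x; rewrite dist0_refl.
Qed.

End Reachability.

Theorem theorem5 (R : realType) (N : nat) (q : R) (H0 : {set 'I_N})
    (p : 'I_N -> R) :
  0 < q < 1 -> in01 p ->
  let Idx := fun i : nat =>
    (i \in Lset q p) || (i \in Rset q p) || (i == ktilde q p) in
  exists (M : R) (FDPi : nat -> R),
    IsMax (fun v => exists p', in01 p' /\ (dist0 p p' <= 1)%N /\ v = FDP q H0 p') M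
    /\ (forall i, Idx i ->
          IsMax (fun v => exists p', in01 p' /\ (dist0 p p' <= 1)%N /\
                            ktilde q p' = i /\ v = FDP q H0 p') (FDPi i))
    /\ IsMax (fun v => exists i, Idx i /\ v = FDPi i) M.
Proof.
move=> /andP[q_gt0 q_lt1] p01 Idx.
pose near v := exists p', in01 p' /\ (dist0 p p' <= 1)%N /\ v = FDP q H0 p'.
pose near_at i v :=
  exists p', in01 p' /\ (dist0 p p' <= 1)%N /\ ktilde q p' = i /\ v = FDP q H0 p'.
have [FDPi FDPi_max] : exists FDPi, forall i, Idx i -> IsMax (near_at i) (FDPi i).
  apply: (functional_choice (fun i m => Idx i -> IsMax (near_at i) m)) => i.
  have [Ii|_] := boolP (Idx i); last by exists 0.
  have [p' [p'01 [pp' kt_p']]] := reachable_index q_gt0 (ltW q_lt1) p01 Ii.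
  suff [m m_max] : exists m, IsMax (near_at i) m by exists m.
  apply: (ex_IsMax_FDP (H0 := H0)) => [v [x [_ [_ [_ ->]]]]|]; first by exists x.
  by exists (FDP q H0 p'), p'.
have [M M_max] : exists M, IsMax near M.
  apply: (ex_IsMax_FDP (H0 := H0)) => [v [x [_ [_ ->]]]|]; first by exists x.
  by exists (FDP q H0 p), p; rewrite dist0_refl.
exists M, FDPi; split=> //; split=> //.
apply: (IsMax_union M_max FDPi_max) => [v [p' [p'01 [pp' ->]]]|i v [p' [? [? [_ ->]]]]].
  exists (ktilde q p'); first exact: (ktilde_neighbour_index (ltW q_gt0) p01 p'01 pp').
  by exists p'.
by exists p'.
Qed.
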